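(* Let $n\geq 1$, $g\geq 1$, $r\geq 1$. Let $C_1,\dots,C_n\subset GL_r(\mathbb{C})$ be conjugacy classes whose collection of eigenvalues is multiplicatively generic and such that $\prod_{i=1}^n\det(C_i)=1$. If $g=1$, assume moreover that at least one of the partitions $P^i$ attached to $C_i$ is not the one-part partition $(r)$. Then there exist $A_k,B_k\in GL_r(\mathbb{C})$ ($k=1,\dots,g$) and $T_i\in C_i$ ($i=1,\dots,n$) such that $$\prod_{k=1}^g (A_k,B_k)\prod_{i=1}^n T_i=\mathrm{Id}_r,\qquad (A_k,B_k):=A_kB_kA_k^{-1}B_k^{-1},$$ and the matrices $A_1,\dots,A_g,B_1,\dots,B_g,T_1,\dots,T_n$ have no common invariant subspace other than $0$ and $\mathbb{C}^r$.
   Context: Partitions: a partition $P=(m_1\geq\dots\geq m_\ell>0)$ of $r$ has conjugate $\widehat P=(n_1,\dots,n_{m_1})$, $n_j=\#\{k:m_k\ge j\}$; the union $P\cup Q$ collects all parts of $P$ and $Q$ in non-increasing order. Partition attached to a conjugacy class $C\subset GL_r(\mathbb{C})$ with distinct eigenvalues $\lambda_1,\dots,\lambda_e$: let $P^{\lambda_j}$ record the sizes of the Jordan blocks of eigenvalue $\lambda_j$; set $P:=\widehat{P}^{\lambda_1}\cup\dots\cup\widehat{P}^{\lambda_e}$. Write $P^i$ for the partition attached to $C_i$. Multiplicative genericity: list the eigenvalues of $C_i$ with multiplicity as $\lambda_{i,1},\dots,\lambda_{i,r}$; the collection is multiplicatively generic if for every $1\le m<r$ and all subsets $\Lambda_1,\dots,\Lambda_n\subset\{1,\dots,r\}$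 of size $m$, $\prod_{i}\prod_{k\in\Lambda_i}\lambda_{i,k}\neq1$. *)

From HB Require Import structures.
From mathcomp Require Import all_boot all_order all_algebra.
From mathcomp Require Import reals.
From mathcomp Require Import complex.
Set Implicit Arguments. Unset Strict Implicit. Unset Printing Implicit Defensive.
Import Order.TTheory GRing.Theory Num.Theory.
Local Open Scope ring_scope.

Section Defs.
Variable F : fieldType.

Definition eigen_listing (r : nat) (M : 'M[F]_r) (s : seq F) : Prop :=
  char_poly M = \prod_(x <- s) ('X - x%:P).

Definition mult_generic (n r : nat) (M : 'I_n -> 'M[F]_r) : Prop :=
  forall lam : 'I_n -> r.-tuple F,
    (forall i, eigen_listing (M i) (lam i)) ->
    forall m : nat, (1 <= m < r)%N ->
    forall L : 'I_n -> {set 'I_r}, (forall i, #|L i| = m) ->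
      \prod_(i < n) \prod_(k in L i) tnth (lam i) k != 1.

(* Conjugate of the Jordan-type partition P^lambda of M at eigenvalue a:
   its j-th part is the number of Jordan blocks of size >= j, i.e.
   rank (M - a)^(j-1) - rank (M - a)^j. *)
Definition conj_jordan_part (r : nat) (M : 'M[F]_r) (a : F) : seq nat :=
  [seq x <- [seq (\rank ((M - a%:M) ^+ j.-1) - \rank ((M - a%:M) ^+ j))%N
             | j <- iota 1 r] | (0 < x)%N].

Definition attached_partition (r : nat) (M : 'M[F]_r) (s : seq F) : seq nat :=
  sort geq (flatten [seq conj_jordan_part M a | a <- undup s]).

Definition in_class (r : nat) (M T : 'M[F]_r) : Prop :=
  exists2 P : 'M[F]_r, P \in unitmx & T = P *m M *m invmx P.

Definition commutatorm (r : nat) (A B : 'M[F]_r) : 'M[F]_r :=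
  A *m B *m invmx A *m invmx B.

(* W (the column space spanned by the transposed rows of U) is invariant
   under the column action v |-> X v. *)
Definition col_invariant (r : nat) (U X : 'M[F]_r) : bool :=
  (U *m X^T <= U)%MS.

End Defs.

(* Conjugate every M_i to a triangular T_i.  The product Y of the T_i is
   triangular, its diagonal entries x_k have product prod_i det M_i = 1, and
   genericity says that no proper nonempty subproduct of the x_k equals 1.
   Hence the partial products p_j = x_0 ... x_(j-1) are pairwise distinct, and
   Y D, for D = diag (p_j), is triangular with diagonal (p_1, ..., p_(r-1), p_0):
   it has the same simple spectrum as D, so Y D = B D B^-1, i.e. (D, B) Y = 1.
   Irreducibility holds for every solution: if W is a common invariant subspace
   of dimension 0 < d < r, the determinant of the restriction to W is
   multiplicative on the stabiliser of W and trivial on commutators, so the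
   relation forces prod_i det (T_i|W) = 1, a product of d eigenvalues of each
   M_i, against genericity. *)

From HB Require Import structures.
From mathcomp Require Import all_boot all_order all_algebra.
From mathcomp Require Import reals complex.
From mathcomp Require Import perm ring.
Set Implicit Arguments. Unset Strict Implicit. Unset Printing Implicit Defensive.
Import Order.TTheory GRing.Theory Num.Theory.
Local Open Scope ring_scope.

Section CharPoly.
Variable F : fieldType.

Lemma char_poly_conj n (P A : 'M[F]_n) : P \in unitmx ->
  char_poly (P *m A *m invmx P) = char_poly A.
Proof.
move=> Pu; rewrite /char_poly /char_poly_mx.
set pP := map_mx polyC P; set pQ := map_mx polyC (invmx P).
have -> : 'X%:M - map_mx polyC (P *m A *m invmx P)
          = pP *m ('X%:M - map_mx polyC A) *m pQ.
  rewrite !map_mxM mulmxBr mulmxBl -!mulmxA; congr (_ - _).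
  by rewrite mulmxA scalar_mxC -mulmxA -map_mxM mulmxV // map_mx1 mulmx1.
rewrite !det_mulmx !det_map_mx mulrC mulrA -rmorphM -det_mulmx mulVmx //.
by rewrite det1 rmorph1 mul1r.
Qed.

Lemma char_poly_trmx n (A : 'M[F]_n) : char_poly A^T = char_poly A.
Proof.
rewrite /char_poly /char_poly_mx -[RHS]det_tr; congr (\det _).
by rewrite linearB /= tr_scalar_mx map_trmx.
Qed.

Lemma char_poly_lblock d e (Y : 'M[F]_d) (Z : 'M[F]_(e, d)) (X : 'M[F]_e) :
  char_poly (block_mx Y 0 Z X) = char_poly Y * char_poly X.
Proof.
rewrite /char_poly /char_poly_mx map_block_mx (scalar_mx_block d e).
by rewrite opp_block_mx add_block_mx map_mx0 oppr0 addr0 det_lblock.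
Qed.

Lemma size_eigen_listing n (A : 'M[F]_n) s : eigen_listing A s -> size s = n.
Proof. by move=> As; have := size_char_poly A; rewrite As size_prod_XsubC => -[]. Qed.

Lemma det_eigen_listing n (A : 'M[F]_n) s :
  eigen_listing A s -> \det A = \prod_(x <- s) x.
Proof.
move=> As; have := char_poly_det A; rewrite As coef0_prod_XsubC.
rewrite (size_eigen_listing As) => /mulfI -> //.
by rewrite signr_eq0.
Qed.

Lemma eigen_listing_in_class n (A B : 'M[F]_n) s :
  in_class A B -> eigen_listing B s = eigen_listing A s.
Proof. by move=> [P Pu ->]; rewrite /eigen_listing char_poly_conj. Qed.

Lemma eigen_listing_trig n (A : 'M[F]_n) : is_trig_mx A ->
  eigen_listing A [tuple A k k | k < n].
Proof.
move=> At; rewrite /eigen_listing char_poly_trig // big_tuple.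
by apply: eq_bigr => k _; rewrite tnth_mktuple.
Qed.

End CharPoly.

Lemma eigen_listing_exists (F : closedFieldType) n (A : 'M[F]_n) :
  exists t : n.-tuple F, eigen_listing A t.
Proof.
have [s As] := closed_field_poly_normal (char_poly A).
rewrite (monicP (char_poly_monic A)) scale1r in As.
have /eqP sz := size_eigen_listing As.
by exists (Tuple sz).
Qed.

Section Triangular.
Variables (F : fieldType) (n : nat).
Implicit Types A B : 'M[F]_n.

Lemma is_trig_mxM A B : is_trig_mx A -> is_trig_mx B -> is_trig_mx (A *m B).
Proof.
move=> /is_trig_mxP At /is_trig_mxP Bt; apply/is_trig_mxP => i j lt_ij.
rewrite mxE big1 // => k _; case: (ltnP i k) => [lt_ik|le_ki].
  by rewrite At // mul0r.
by rewrite Bt ?mulr0 // (leq_ltn_trans le_ki lt_ij).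
Qed.

Lemma mulmx_trig_diag A B i : is_trig_mx A -> is_trig_mx B ->
  (A *m B) i i = A i i * B i i.
Proof.
move=> /is_trig_mxP At /is_trig_mxP Bt; rewrite mxE (bigD1 i) //= big1 ?addr0 //.
move=> k /negPf nki; case: (ltngtP i k) => [lt_ik|lt_ki|eik].
- by rewrite At // mul0r.
- by rewrite Bt ?mulr0.
- by rewrite (val_inj eik) eqxx in nki.
Qed.

Lemma is_trig_mx_prod m (T : 'I_m -> 'M[F]_n) : (forall i, is_trig_mx (T i)) ->
  is_trig_mx (\big[mulmx/1%:M]_(i < m) T i).
Proof.
move=> Tt; apply: (big_ind (fun A : 'M[F]_n => is_trig_mx A)) => //.
exact: is_trig_mxM.
Qed.

Lemma trig_prod_diag m (T : 'I_m -> 'M[F]_n) k : (forall i, is_trig_mx (T i)) ->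
  (\big[mulmx/1%:M]_(i < m) T i) k k = \prod_(i < m) T i k k.
Proof.
elim: m T => [|m IHm] T Tt; first by rewrite !big_ord0 mxE eqxx.
rewrite !big_ord_recl mulmx_trig_diag ?IHm //; exact: is_trig_mx_prod.
Qed.

End Triangular.

Section Conjugacy.
Variable F : fieldType.

Lemma mulmx1_invmx n (A B : 'M[F]_n) : A *m B = 1%:M -> invmx A = B.
Proof.
move=> AB; have [Au _] := mulmx1_unit AB.
by rewrite -[invmx A]mulmx1 -AB mulmxA mulVmx // mul1mx.
Qed.

Lemma in_class_trans n (A B C : 'M[F]_n) :
  in_class A B -> in_class B C -> in_class A C.
Proof.
move=> [P Pu ->] [Q Qu ->]; exists (Q *m P); first by rewrite unitmx_mul Qu.
have -> : invmx (Q *m P) = invmx P *m invmx Q.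
  by apply: mulmx1_invmx; rewrite mulmxA mulmxK // mulmxV.
by rewrite !mulmxA.
Qed.

Lemma eigen_listing_perm n (A : 'M[F]_n) s t :
  eigen_listing A s -> eigen_listing A t -> perm_eq s t.
Proof. by move=> As At; apply: prod_XsubC_eq; rewrite -As -At. Qed.

Lemma eigen_listing_diag n (d : 'rV[F]_n) :
  eigen_listing (diag_mx d) [tuple d 0 k | k < n].
Proof.
rewrite /eigen_listing char_poly_trig ?diag_mx_is_trig // big_tuple.
by apply: eq_bigr => k _; rewrite tnth_mktuple mxE eqxx mulr1n.
Qed.

Lemma in_class_perm_diag n (t : n.-tuple F) (s : 'S_n) :
  in_class (diag_mx (\row_k tnth t k)) (diag_mx (\row_k tnth t (s k))).
Proof.
exists (perm_mx s); first exact: unitmx_perm.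
have -> : invmx (perm_mx s : 'M[F]_n) = perm_mx s^-1.
  by apply: mulmx1_invmx; rewrite -perm_mxM mulgV perm_mx1.
apply/matrixP => i j.
by rewrite -row_permE -col_permE !mxE (inj_eq perm_inj).
Qed.

Lemma in_class_diag_uniq n (A : 'M[F]_n.+1) (t : n.+1.-tuple F) :
  uniq t -> eigen_listing A t -> in_class (diag_mx (\row_k tnth t k)) A.
Proof.
move=> t_uniq At.
have [P Pu /(similar_diagLR Pu) [D eA]] : diagonalizable A.
  by apply/diagonalizableP; exists t => //; rewrite -At mxminpoly_dvd_char.
rewrite conjumx ?unitmx_inv // invmxK in eA.
have DA : in_class (diag_mx D) A.
  by exists (invmx P); rewrite ?unitmx_inv ?invmxK.
have /tuple_permP [s Ds] : perm_eq [tuple D 0 k | k < n.+1] t.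
  apply: (eigen_listing_perm _ At); rewrite (eigen_listing_in_class _ DA).
  exact: eigen_listing_diag.
apply: in_class_trans DA; apply: (in_class_trans (in_class_perm_diag t s)).
suff -> : D = \row_k tnth t (s k) by exists 1%:M; rewrite ?unitmx1 ?invmx1 ?mul1mx ?mulmx1.
apply/rowP => k; have := congr1 (fun u => tnth u k) (val_inj Ds).
by rewrite !tnth_mktuple mxE => ->.
Qed.

End Conjugacy.

Section TrigCommutator.
Variables (F : fieldType) (r' : nat).
Local Notation r := r'.+1.
Variable Y : 'M[F]_r.
Hypothesis Y_trig : is_trig_mx Y.
Hypothesis Y_diag_prod : \prod_k Y k k = 1.
Hypothesis Y_diag_generic : forall S : {set 'I_r},
  S != set0 -> S != setT -> \prod_(k in S) Y k k != 1.

Let p (j : 'I_r) := \prod_(k < r | (k < j)%N) Y k k.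

Lemma partial_prod_neq0 j : p j != 0.
Proof.
apply/prodf_neq0 => k _; apply/eqP => Ykk0; move/eqP: Y_diag_prod.
by rewrite (bigD1 k) //= Ykk0 mul0r eq_sym oner_eq0.
Qed.

Lemma partial_prodS k : Y k k * p k = p (ordS k).
Proof.
have -> : Y k k * p k = \prod_(i < r | (i < k.+1)%N) Y i i.
  rewrite [RHS](bigD1 k) //=; congr (_ * _); apply: eq_bigl => i.
  by rewrite ltnS ltn_neqAle andbC.
rewrite /p /=; have [lt_kr|le_rk] := ltnP k.+1 r; first by rewrite modn_small.
have -> : k.+1 = r by apply/eqP; rewrite eqn_leq ltn_ord.
rewrite modnn [RHS]big_pred0 // -[RHS]Y_diag_prod.
by apply: eq_bigl => i; rewrite ltn_ord.
Qed.

Lemma partial_prod_inj : injective p.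
Proof.
suff p_neq (j l : 'I_r) : (j < l)%N -> p j != p l.
  move=> j l; case: (ltngtP j l) => [lt_jl|lt_lj|/val_inj //] pjl.
    by have := p_neq _ _ lt_jl; rewrite pjl eqxx.
  by have := p_neq _ _ lt_lj; rewrite pjl eqxx.
move=> lt_jl; pose S := [set k : 'I_r | (j <= k < l)%N].
have pl : p l = p j * \prod_(k in S) Y k k.
  rewrite /p (bigID (fun k : 'I_r => (k < j)%N)) /=; congr (_ * _).
    by apply: eq_bigl => k; apply: andb_idl => /ltn_trans; apply.
  by apply: eq_bigl => k; rewrite inE -leqNgt andbC.
have S0 : S != set0 by apply/set0Pn; exists j; rewrite inE leqnn lt_jl.
have ST : S != setT.
  apply/negP => /eqP ST; have [j0|j_gt0] := posnP j.
    have := in_setT (@ord_max r'); rewrite -ST inE /= => /andP[_].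
    by rewrite ltnNge -ltnS ltn_ord.
  by have := in_setT (@ord0 r'); rewrite -ST inE /= leqNgt j_gt0.
apply: contra (Y_diag_generic S0 ST) => /eqP pjl; apply/eqP.
by apply: (mulfI (partial_prod_neq0 j)); rewrite -pl -pjl mulr1.
Qed.

Lemma trig_generic_commutator :
  exists2 A : 'M[F]_r, A \in unitmx &
  exists2 B : 'M[F]_r, B \in unitmx & commutatorm A B *m Y = 1%:M.
Proof.
pose D := diag_mx (\row_k p k).
have Du : D \in unitmx.
  by rewrite unitmxE det_diag unitfE; apply/prodf_neq0 => k _; rewrite mxE partial_prod_neq0.
have YD_trig : is_trig_mx (Y *m D) by rewrite is_trig_mxM ?diag_mx_is_trig.
have YD_listing : eigen_listing (Y *m D) [tuple p k | k < r].
  rewrite /eigen_listing char_poly_trig // big_tuple [RHS](reindex_inj (@ordS_inj r)) /=.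
  apply: eq_bigr => k _; rewrite tnth_mktuple mulmx_trig_diag ?diag_mx_is_trig //.
  by rewrite !mxE eqxx mulr1n partial_prodS.
have p_uniq : uniq [tuple p k | k < r].
  by apply/tuple_uniqP => j l; rewrite !tnth_mktuple => /partial_prod_inj.
have [B Bu YDE] := in_class_diag_uniq p_uniq YD_listing.
have {YDE} YDE : Y *m D = B *m D *m invmx B.
  by rewrite YDE; congr (_ *m _ *m _); apply/matrixP => i j; rewrite !mxE tnth_mktuple.
exists D => //; exists B => //.
have -> : Y = B *m D *m invmx B *m invmx D by rewrite -YDE mulmxK.
by rewrite /commutatorm !mulmxA mulmxKV // mulmxKV // mulmxK // mulmxV.
Qed.

End TrigCommutator.

Lemma in_class_trig (C : numClosedFieldType) n (A : 'M[C]_n.+1) :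
  exists2 T, in_class A T & is_trig_mx T.
Proof.
have [P Pu PAt] := Schur A (ltn0Sn n).
have Pu' : P \in unitmx by exact: unitarymx_unit.
by exists (P *m A *m invmx P); [exists P | rewrite -conjumx].
Qed.

Section TrigProduct.
Variables (F : fieldType) (r n : nat) (M T : 'I_n -> 'M[F]_r).
Hypothesis MT : forall i, in_class (M i) (T i).
Hypothesis T_trig : forall i, is_trig_mx (T i).
Local Notation Y := (\big[mulmx/1%:M]_(i < n) T i).

Lemma eigen_listing_trig_class i : eigen_listing (M i) [tuple T i k k | k < r].
Proof. by rewrite -(eigen_listing_in_class _ (MT i)); exact: eigen_listing_trig. Qed.

Lemma trig_prod_diag_subset (S : pred 'I_r) :
  \prod_(k | S k) Y k k = \prod_i \prod_(k | S k) tnth [tuple T i k k | k < r] k.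
Proof.
rewrite exchange_big; apply: eq_bigr => k _; rewrite trig_prod_diag //.
by apply: eq_bigr => i _; rewrite tnth_mktuple.
Qed.

Lemma trig_prod_diag_det : \prod_k Y k k = \prod_i \det (M i).
Proof.
rewrite (trig_prod_diag_subset xpredT); apply: eq_bigr => i _.
by rewrite (det_eigen_listing (eigen_listing_trig_class i)) big_tuple.
Qed.

Lemma trig_prod_diag_generic : mult_generic M -> forall S : {set 'I_r},
  S != set0 -> S != setT -> \prod_(k in S) Y k k != 1.
Proof.
move=> Mgen S S0 ST; rewrite (trig_prod_diag_subset (mem S)).
apply: (Mgen _ eigen_listing_trig_class #|S| _ (fun _ => S)) => //.
have SpT : S \proper setT by rewrite properT.
by rewrite card_gt0 S0 /=; have := proper_card SpT; rewrite cardsT card_ord.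
Qed.

End TrigProduct.

Lemma exists_commutator_solution (C : numClosedFieldType) r' n g'
    (M : 'I_n -> 'M[C]_r'.+1) :
  mult_generic M -> \prod_(i < n) \det (M i) = 1 ->
  exists (A B : 'I_g'.+1 -> 'M[C]_r'.+1) (T : 'I_n -> 'M[C]_r'.+1),
    [/\ (forall k, A k \in unitmx), (forall k, B k \in unitmx),
        (forall i, in_class (M i) (T i)) &
        (\big[mulmx/1%:M]_(k < g'.+1) commutatorm (A k) (B k))
          *m (\big[mulmx/1%:M]_(i < n) T i) = 1%:M].
Proof.
move=> Mgen detM.
have /fin_all_exists2 [T MT T_trig] := fun i => in_class_trig (M i).
have [|||A0 A0u [B0 B0u AB0]] := @trig_generic_commutator _ _ (\big[mulmx/1%:M]_(i < n) T i).
- exact: is_trig_mx_prod.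
- by rewrite (trig_prod_diag_det MT).
- exact: trig_prod_diag_generic.
pose A (k : 'I_g'.+1) := if k == ord0 then A0 else 1%:M.
pose B (k : 'I_g'.+1) := if k == ord0 then B0 else 1%:M.
exists A, B, T; split => // [k|k|].
- by rewrite /A; case: eqP; rewrite ?unitmx1.
- by rewrite /B; case: eqP; rewrite ?unitmx1.
rewrite big_ord_recl {1}/A {1}/B eqxx.
have -> : \big[mulmx/1%:M]_(k < g') commutatorm (A (lift ord0 k)) (B (lift ord0 k)) = 1%:M.
  apply: (big_ind (fun X => X = 1%:M)) => [//|X Z -> ->|k _]; first exact: mulmx1.
  by rewrite /A /B eq_sym (negPf (neq_lift _ _)) /commutatorm invmx1 !mulmx1.
by rewrite mulmx1.
Qed.

Lemma stablemx_invmx (F : fieldType) m n (V : 'M[F]_(m, n)) f :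
  f \in unitmx -> stablemx V f -> stablemx V (invmx f).
Proof.
move=> fu Vf; have /andP[_ VVf] : (V *m f == V)%MS.
  by rewrite -(geq_leqif (mxrank_leqif_eq Vf)) mxrankMfree ?row_free_unit.
by have := submxMr (invmx f) VVf; rewrite mulmxK.
Qed.

Lemma eqmx_usubmx_row_ebase (F : fieldType) d e (U : 'M[F]_(d + e)) :
  \rank U = d -> (U :=: usubmx (row_ebase U))%MS.
Proof.
move=> rU; set W := usubmx _; have UW : (U <= W)%MS.
  rewrite -[U]mulmx_ebase rU -mulmxA (@pid_mx_block _ e e d) -[row_ebase U]vsubmxK.
  rewrite mul_block_col !mul0mx mul1mx !addr0; apply: submx_trans (submxMl _ _) _.
  by rewrite col_mx_sub submx_refl sub0mx.
by apply/eqmxP; rewrite -(geq_leqif (mxrank_leqif_eq UW)) rU rank_leq_row.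
Qed.

Section StableBlock.
Variables (F : fieldType) (d e : nat) (P : 'M[F]_(d + e)).
Hypothesis Pu : P \in unitmx.
Local Notation W := (usubmx P).
Local Notation conjP Y := (P *m Y *m invmx P).

Lemma usubmx_mul_rsubmx_invmx : W *m rsubmx (invmx P) = 0.
Proof.
have := mulmxV Pu; rewrite -{1}[P]vsubmxK -{1}[invmx P]hsubmxK mul_col_row.
by rewrite (scalar_mx_block d e); case/eq_block_mx.
Qed.

Lemma conj_stable_ursubmx Y : stablemx W Y -> ursubmx (conjP Y) = 0.
Proof.
move=> /submxP [K WY]; rewrite -{1}[P]vsubmxK -{1}[invmx P]hsubmxK.
rewrite !mul_col_mx /ursubmx col_mxKu mul_mx_row row_mxKr WY -mulmxA.
by rewrite usubmx_mul_rsubmx_invmx mulmx0.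
Qed.

Lemma conj_stable_ulsubmxM Y Z : stablemx W Y ->
  ulsubmx (conjP (Y *m Z)) = ulsubmx (conjP Y) *m ulsubmx (conjP Z).
Proof.
move=> WY; have -> : conjP (Y *m Z) = conjP Y *m conjP Z.
  by rewrite !mulmxA mulmxKV.
rewrite -{1}[conjP Y]submxK -{1}[conjP Z]submxK mulmx_block block_mxKul.
by rewrite conj_stable_ursubmx // mul0mx addr0.
Qed.

Lemma char_poly_conj_stable Y : stablemx W Y ->
  char_poly Y = char_poly (ulsubmx (conjP Y)) * char_poly (drsubmx (conjP Y)).
Proof.
move=> WY; rewrite -(char_poly_conj Y Pu) -{1}[conjP Y]submxK.
by rewrite conj_stable_ursubmx // char_poly_lblock.
Qed.

(* When [X^T] stabilises the row space [W], this is the determinant of the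
   restriction of [X^T] to [W]. *)
Definition restr_det (X : 'M[F]_(d + e)) := \det (ulsubmx (conjP X^T)).

Lemma restr_detM X Z : stablemx W Z^T ->
  restr_det (X *m Z) = restr_det X * restr_det Z.
Proof.
by move=> WZ; rewrite /restr_det trmx_mul conj_stable_ulsubmxM // det_mulmx mulrC.
Qed.

Lemma restr_det1 : restr_det 1%:M = 1.
Proof.
by rewrite /restr_det trmx1 mulmx1 mulmxV // (scalar_mx_block d e) block_mxKul det1.
Qed.

Lemma restr_det_invmx X : X \in unitmx -> stablemx W X^T ->
  restr_det (invmx X) * restr_det X = 1.
Proof.
by move=> Xu WX; rewrite -restr_detM ?mulVmx ?restr_det1.
Qed.

Lemma stablemx_trmx_invmx X : X \in unitmx ->
  stablemx W X^T -> stablemx W (invmx X)^T.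
Proof. by move=> Xu WX; rewrite trmx_inv stablemx_invmx ?unitmx_tr. Qed.

Lemma stablemx_trmx_commutator A B : A \in unitmx -> B \in unitmx ->
  stablemx W A^T -> stablemx W B^T -> stablemx W (commutatorm A B)^T.
Proof.
move=> Au Bu WA WB.
by rewrite /commutatorm !trmx_mul !stablemxM ?stablemx_trmx_invmx.
Qed.

Lemma restr_det_commutator A B : A \in unitmx -> B \in unitmx ->
  stablemx W A^T -> stablemx W B^T -> restr_det (commutatorm A B) = 1.
Proof.
move=> Au Bu WA WB; rewrite /commutatorm !restr_detM ?stablemx_trmx_invmx //.
transitivity ((restr_det (invmx A) * restr_det A) * (restr_det (invmx B) * restr_det B)).
  by ring.
by rewrite !restr_det_invmx // mulr1.
Qed.

Lemma restr_det_prod m (X : 'I_m -> 'M[F]_(d + e)) :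
  (forall k, stablemx W (X k)^T) ->
  stablemx W (\big[mulmx/1%:M]_(k < m) X k)^T /\
  restr_det (\big[mulmx/1%:M]_(k < m) X k) = \prod_(k < m) restr_det (X k).
Proof.
elim: m X => [|m IHm] X WX; first by rewrite !big_ord0 trmx1 restr_det1 stablemxC.
have [WXs Xs] := IHm _ (fun k => WX (lift ord0 k)).
by rewrite !big_ord_recl restr_detM // Xs trmx_mul stablemxM.
Qed.

End StableBlock.

Section GenericStableBlock.
Variables (F : closedFieldType) (d e : nat) (P : 'M[F]_(d + e)).
Hypothesis Pu : P \in unitmx.
Local Notation W := (usubmx P).

Lemma restr_det_eigen_listing M X : in_class M X -> stablemx W X^T ->
  exists t : (d + e).-tuple F,
    eigen_listing M t /\ \prod_(k < d) tnth t (lshift e k) = restr_det P X.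
Proof.
move=> MX WX; have [tY HY] := eigen_listing_exists (ulsubmx (P *m X^T *m invmx P)).
have [tZ HZ] := eigen_listing_exists (drsubmx (P *m X^T *m invmx P)).
exists [tuple of tY ++ tZ]; split.
  rewrite -(eigen_listing_in_class _ MX) /eigen_listing -char_poly_trmx.
  by rewrite (char_poly_conj_stable Pu WX) big_cat /= HY HZ.
rewrite /restr_det (det_eigen_listing HY) big_tuple.
by apply: eq_bigr => k _; rewrite tnth_lshift.
Qed.

Lemma generic_no_stable_block n g (M T : 'I_n -> 'M[F]_(d + e))
    (A B : 'I_g -> 'M[F]_(d + e)) :
  (0 < d)%N -> (0 < e)%N -> mult_generic M ->
  (forall i, in_class (M i) (T i)) ->
  (forall k, A k \in unitmx) -> (forall k, B k \in unitmx) ->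
  (\big[mulmx/1%:M]_(k < g) commutatorm (A k) (B k))
    *m (\big[mulmx/1%:M]_(i < n) T i) = 1%:M ->
  (forall k, stablemx W (A k)^T) -> (forall k, stablemx W (B k)^T) ->
  ~ (forall i, stablemx W (T i)^T).
Proof.
move=> d_gt0 e_gt0 Mgen MT Au Bu prod1 WA WB WT.
have WC k := stablemx_trmx_commutator (Au k) (Bu k) (WA k) (WB k).
have [_ Cs] := restr_det_prod Pu WC; rewrite /= in Cs.
have [WTs Ts] := restr_det_prod Pu WT.
have /fin_all_exists [lam lamP] i := restr_det_eigen_listing (MT i) (WT i).
pose L : {set 'I_(d + e)} := [set lshift e k | k : 'I_d].
have cardL : #|L| = d by rewrite card_imset ?card_ord //; exact: lshift_inj.
have dL : (1 <= d < d + e)%N by rewrite d_gt0 -addn1 leq_add2l.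
have := Mgen lam (fun i => (lamP i).1) d dL (fun _ => L) (fun _ => cardL).
apply/negP; rewrite negbK.
rewrite -[X in _ == X](restr_det1 Pu) -prod1 (restr_detM Pu); last exact: WTs.
rewrite Cs Ts.
rewrite [X in _ == X * _]big1 ?mul1r => [|k _]; last exact: (restr_det_commutator Pu).
apply/eqP/eq_bigr => i _; rewrite -(lamP i).2 big_imset //=.
by move=> j k _ _; exact: lshift_inj.
Qed.

End GenericStableBlock.

Lemma generic_col_invariant_trivial (F : closedFieldType) r n g
    (M T : 'I_n -> 'M[F]_r) (A B : 'I_g -> 'M[F]_r) :
  mult_generic M -> (forall i, in_class (M i) (T i)) ->
  (forall k, A k \in unitmx) -> (forall k, B k \in unitmx) ->
  (\big[mulmx/1%:M]_(k < g) commutatorm (A k) (B k))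
    *m (\big[mulmx/1%:M]_(i < n) T i) = 1%:M ->
  forall U : 'M[F]_r,
    (forall k, col_invariant U (A k)) -> (forall k, col_invariant U (B k)) ->
    (forall i, col_invariant U (T i)) -> (\rank U == 0)%N || (\rank U == r).
Proof.
move=> Mgen MT Au Bu prod1 U UA UB UT.
have [d rU] : {d | \rank U = d} by exists (\rank U).
have [e def_r] : {e | r = (d + e)%N} by exists (r - d)%N; rewrite subnKC // -rU rank_leq_col.
subst r; rewrite rU; case: (posnP d) => [-> //|d_gt0].
case: (posnP e) => [->|e_gt0]; first by rewrite addn0 eqxx orbT.
have UW := eqmx_usubmx_row_ebase rU.
have stableW X : col_invariant U X -> stablemx (usubmx (row_ebase U)) X^T.
  by rewrite -(eqmx_stable _ UW).
exfalso; apply: (generic_no_stable_block (row_ebase_unit U) d_gt0 e_gt0 Mgen MT Au Bu prod1).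
- by move=> k; apply: stableW.
- by move=> k; apply: stableW.
- by move=> i; apply: stableW.
Qed.

Unset Implicit Arguments.

Theorem mainTheorem2 (R : realType) (n g r : nat) (M : 'I_n -> 'M[R[i]]_r) :
  (1 <= n)%N -> (1 <= g)%N -> (1 <= r)%N ->
  (forall i, M i \in unitmx) ->
  mult_generic M ->
  \prod_(i < n) \det (M i) = 1 ->
  (g = 1%N -> exists i : 'I_n, forall s, eigen_listing (M i) s ->
                attached_partition (M i) s != [:: r]) ->
  exists (A B : 'I_g -> 'M[R[i]]_r) (T : 'I_n -> 'M[R[i]]_r),
    [/\ (forall k, A k \in unitmx), (forall k, B k \in unitmx),
        (forall i, in_class (M i) (T i)),
        (\big[mulmx/1%:M]_(k < g) commutatorm (A k) (B k))
          *m (\big[mulmx/1%:M]_(i < n) T i) = 1%:M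
      & forall U : 'M[R[i]]_r,
          (forall k, col_invariant U (A k)) ->
          (forall k, col_invariant U (B k)) ->
          (forall i, col_invariant U (T i)) ->
          (\rank U == 0)%N || (\rank U == r)].
Proof.
move=> _ g_gt0 r_gt0 _ Mgen detM _.
case: r r_gt0 => [//|r'] _ in M Mgen detM *.
case: g g_gt0 => [//|g'] _.
have [A [B [T [Au Bu MT prod1]]]] := exists_commutator_solution g' Mgen detM.
exists A, B, T; split => //.
exact: generic_col_invariant_trivial Mgen MT Au Bu prod1.
Qed.
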